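(* Let $G$ be a finitely generated group and $\mathcal{P}$ a finite family of infinite subgroups with $\mathcal{P}\hookrightarrow_h G$. If $H\le G$ is $(G,\mathcal{P})$--quasiconvex and $H'$ is a finite-index subgroup of $H$, then $H'$ is also $(G,\mathcal{P})$--quasiconvex.
   Context: A graph is fine at $v$ if the angle metric on neighbours of $v$ ($\angle_v(x,y)$ = length of a shortest path from $x$ to $y$ avoiding $v$) is locally finite. A $(G,\mathcal{P})$--graph: a connected hyperbolic graph with a $G$-action having finitely many vertex orbits, vertex stabilizers finite or conjugates of members of $\mathcal{P}$ (each $P\in\mathcal{P}$ being the stabilizer of some vertex), finite edge stabilizers, fine at vertices with infinite stabilizer. $H$ is $(G,\mathcal{P})$--quasiconvex if some $(G,\mathcal{P})$--graph $K$ has a nonempty connected $H$-invariant quasi-isometrically embedded subgraph $L$ with finitely many $H$-orbits of vertices. $\mathcal{P}\hookrightarrow_h G$ means the existence of a $(G,\mathcal{P})$--graph (equivalently, hyperbolic embedding in the sense of Dahmani–Guirardel–Osin). *)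

From Stdlib Require Import List Arith.
Import ListNotations.
Set Implicit Arguments.

Record Grp := {
  gcar :> Type;
  gmul : gcar -> gcar -> gcar;
  gone : gcar;
  ginv : gcar -> gcar;
  gmulA : forall x y z, gmul x (gmul y z) = gmul (gmul x y) z;
  gmul1l : forall x, gmul gone x = x;
  gmul1r : forall x, gmul x gone = x;
  gmulVl : forall x, gmul (ginv x) x = gone;
  gmulVr : forall x, gmul x (ginv x) = gone
}.

Definition finite_pred {T : Type} (P : T -> Prop) : Prop :=
  exists l : list T, forall x, P x -> In x l.

Definition subgroup (G : Grp) (H : G -> Prop) : Prop :=
  H (gone G) /\
  (forall x y, H x -> H y -> H (gmul G x y)) /\
  (forall x, H x -> H (ginv G x)).

Inductive generated (G : Grp) (S : list G) : G -> Prop :=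
| gen_one : @generated G S (gone G)
| gen_gen : forall s, In s S -> @generated G S s
| gen_inv : forall x, @generated G S x -> @generated G S (ginv G x)
| gen_mul : forall x y, @generated G S x -> @generated G S y -> @generated G S (gmul G x y).

Definition finitely_generated (G : Grp) : Prop :=
  exists S : list G, forall x : G, @generated G S x.

(* H' has finite index in H (H' is assumed to be a subgroup of H):
   finitely many left cosets r H' (r in H) cover H. *)
Definition finite_index (G : Grp) (H' H : G -> Prop) : Prop :=
  exists l : list G, (forall r, In r l -> H r) /\
    forall h, H h -> exists r h', In r l /\ H' h' /\ h = gmul G r h'.

(* Walks: [walk E x p y] means x = v0, p = [v1;...;vn], vn = y, E v_i v_{i+1}.
   Its length (number of edges) is [length p]. *)
Inductive walk {V : Type} (E : V -> V -> Prop) : V -> list V -> V -> Prop :=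
| walk_nil : forall x, walk E x nil x
| walk_cons : forall x y p z, E x y -> walk E y p z -> walk E x (y :: p) z.

Definition dist_le {V : Type} (E : V -> V -> Prop) (x y : V) (n : nat) : Prop :=
  exists p, walk E x p y /\ length p <= n.

Definition connected_graph {V : Type} (E : V -> V -> Prop) : Prop :=
  forall x y : V, exists p, walk E x p y.

Definition geodesic {V : Type} (E : V -> V -> Prop) (x : V) (p : list V) (y : V) : Prop :=
  walk E x p y /\ forall q, walk E x q y -> length p <= length q.

Definition hyperbolic_graph {V : Type} (E : V -> V -> Prop) : Prop :=
  exists delta : nat, forall x y z p q r,
    geodesic E x p y -> geodesic E y q z -> geodesic E z r x ->
    forall u, In u (x :: p) ->
      exists w, In w ((y :: q) ++ (z :: r)) /\ dist_le E u w delta.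

(* Fineness at v: the angle metric on the neighbours of v
   (angle(x,y) = length of a shortest path from x to y avoiding v)
   is locally finite: every ball of finite radius is finite. *)
Definition avoid {V : Type} (E : V -> V -> Prop) (v : V) : V -> V -> Prop :=
  fun a b => E a b /\ a <> v /\ b <> v.

Definition fine_at {V : Type} (E : V -> V -> Prop) (v : V) : Prop :=
  forall x, E v x -> forall n : nat,
    finite_pred (fun y => E v y /\ dist_le (avoid E v) x y n).

Record GPgraph (G : Grp) (Ps : list (G -> Prop)) := {
  gV : Type;
  gadj : gV -> gV -> Prop;
  gadj_sym : forall x y, gadj x y -> gadj y x;
  gadj_irr : forall x, ~ gadj x x;
  gact : G -> gV -> gV;
  gact_one : forall v, gact (gone G) v = v;
  gact_mul : forall g h v, gact (gmul G g h) v = gact g (gact h v);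
  gact_adj : forall g x y, gadj x y -> gadj (gact g x) (gact g y);
  g_connected : connected_graph gadj;
  g_hyperbolic : hyperbolic_graph gadj;
  g_fin_orbits : exists l : list gV, forall v, exists w g, In w l /\ v = gact g w;
  g_vstab : forall v,
      finite_pred (fun g => gact g v = v) \/
      exists (P : G -> Prop) (c : G), In P Ps /\
        forall g, gact g v = v <-> P (gmul G (ginv G c) (gmul G g c));
  g_P_stab : forall P, In P Ps -> exists v, forall g, gact g v = v <-> P g;
  g_estab : forall x y, gadj x y ->
      finite_pred (fun g => (gact g x = x /\ gact g y = y) \/
                            (gact g x = y /\ gact g y = x));
  g_fine : forall v, ~ finite_pred (fun g => gact g v = v) -> fine_at gadj v
}.

Definition hyp_embedded (G : Grp) (Ps : list (G -> Prop)) : Prop :=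
  inhabited (GPgraph G Ps).

(* H is (G,P)-quasiconvex. A subgraph L of K is given by a vertex set LV and
   an edge set LE of edges of K with endpoints in LV. *)
Definition GP_quasiconvex (G : Grp) (Ps : list (G -> Prop)) (H : G -> Prop) : Prop :=
  exists (K : GPgraph G Ps) (LV : gV K -> Prop) (LE : gV K -> gV K -> Prop),
    (forall x y, LE x y -> gadj K x y /\ LV x /\ LV y) /\
    (forall x y, LE x y -> LE y x) /\
    (exists x, LV x) /\
    (forall x y, LV x -> LV y -> exists p, walk LE x p y) /\
    (forall h x, H h -> LV x -> LV (gact K h x)) /\
    (forall h x y, H h -> LE x y -> LE (gact K h x) (gact K h y)) /\
    (exists l : list (gV K), forall v, LV v ->
        exists w h, In w l /\ H h /\ v = gact K h w) /\
    (exists lam c : nat, forall x y, LV x -> LV y -> forall n,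
        (dist_le (gadj K) x y n -> dist_le LE x y (lam * n + c)) /\
        (dist_le LE x y n -> dist_le (gadj K) x y (lam * n + c))).

Arguments subgroup G H : clear implicits.
Arguments finite_index G H' H : clear implicits.
Arguments finitely_generated G : clear implicits.

(** The (G,P)-graph K and the subgraph L that witness the quasiconvexity of H
    also witness that of H': every condition except finiteness of the orbits
    of vertices only gets weaker when passing to a subgroup.  If H is the union
    of finitely many right cosets H' r_1, ..., H' r_k, then each H-orbit H w of
    vertices of L is the union of the k orbits H' (r_i w), so L still has
    finitely many H'-orbits. *)

From Stdlib Require Import List.

Section GroupLemmas.

Variable G : Grp.

Lemma ginv_mul (a b : G) : ginv G (gmul G a b) = gmul G (ginv G b) (ginv G a).
Proof.
  assert (Hright : gmul G (gmul G a b) (gmul G (ginv G b) (ginv G a)) = gone G).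
  { rewrite gmulA, <- (gmulA G a b), gmulVr, gmul1r, gmulVr. reflexivity. }
  rewrite <- (gmul1r G (ginv G (gmul G a b))), <- Hright.
  rewrite gmulA, gmulVl, gmul1l. reflexivity.
Qed.

Lemma ginv_inv (a : G) : ginv G (ginv G a) = a.
Proof.
  rewrite <- (gmul1r G (ginv G (ginv G a))), <- (gmulVl G a).
  rewrite gmulA, gmulVl. apply gmul1l.
Qed.

Lemma finite_index_right_cosets {H H' : G -> Prop} :
  subgroup G H -> subgroup G H' -> finite_index G H' H ->
  exists l : list G, forall h, H h ->
    exists h' r, In r l /\ H' h' /\ h = gmul G h' r.
Proof.
  intros [_ [_ H_inv]] [_ [_ H'_inv]] [lr [_ Hcover]].
  exists (map (ginv G) lr).
  intros h Hh.
  destruct (Hcover (ginv G h) (H_inv h Hh)) as (r & h' & Hr & Hh' & Hdecomp).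
  exists (ginv G h'), (ginv G r).
  split; [apply in_map; exact Hr|].
  split; [apply H'_inv; exact Hh'|].
  rewrite <- ginv_mul, <- Hdecomp, ginv_inv. reflexivity.
Qed.

End GroupLemmas.

Definition finitely_many_orbits {G : Grp} {V : Type} (act : G -> V -> V)
    (H : G -> Prop) (X : V -> Prop) : Prop :=
  exists l : list V, forall v, X v -> exists w h, In w l /\ H h /\ v = act h w.

Lemma finitely_many_orbits_right_cosets {G : Grp} {V : Type}
    (act : G -> V -> V)
    (act_mul : forall g h v, act (gmul G g h) v = act g (act h v))
    (H H' : G -> Prop) (X : V -> Prop) :
  (exists l : list G, forall h, H h ->
     exists h' r, In r l /\ H' h' /\ h = gmul G h' r) ->
  finitely_many_orbits act H X -> finitely_many_orbits act H' X.
Proof.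
  intros [lr Hcover] [l Horb].
  exists (flat_map (fun r => map (act r) l) lr).
  intros v Hv.
  destruct (Horb v Hv) as (w & h & Hw & Hh & ->).
  destruct (Hcover h Hh) as (h' & r & Hr & Hh' & ->).
  exists (act r w), h'.
  split; [apply in_flat_map; exists r; split; [exact Hr | apply in_map; exact Hw]|].
  split; [exact Hh' | apply act_mul].
Qed.

Lemma GP_quasiconvex_subgroup {G : Grp} {Ps : list (G -> Prop)}
    {H H' : G -> Prop} :
  (forall x, H' x -> H x) ->
  (forall (K : GPgraph G Ps) (X : gV K -> Prop),
     finitely_many_orbits (gact K) H X -> finitely_many_orbits (gact K) H' X) ->
  GP_quasiconvex G Ps H -> GP_quasiconvex G Ps H'.
Proof.
  intros Hsub Horbits
    (K & LV & LE & Hsubgraph & Hsym & Hne & Hconn & Hinv_V & Hinv_E & Horb & Hqi).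
  exists K, LV, LE.
  do 4 (split; [assumption|]).
  split; [intros h x Hh; apply Hinv_V; auto|].
  split; [intros h x y Hh; apply Hinv_E; auto|].
  split; [exact (Horbits K LV Horb) | exact Hqi].
Qed.

Theorem proposition5p3 (G : Grp) (Ps : list (G -> Prop)) :
  finitely_generated G ->
  (forall P, In P Ps -> subgroup G P /\ ~ finite_pred P) ->
  hyp_embedded G Ps ->
  forall H H' : G -> Prop,
    subgroup G H -> GP_quasiconvex G Ps H ->
    subgroup G H' -> (forall x, H' x -> H x) -> finite_index G H' H ->
    GP_quasiconvex G Ps H'.
Proof.
  intros _ _ _ H H' HH HQC HH' Hsub Hindex.
  apply (GP_quasiconvex_subgroup Hsub); [|exact HQC].
  intros K X.
  apply (finitely_many_orbits_right_cosets (gact K) (gact_mul K)).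
  exact (finite_index_right_cosets G HH HH' Hindex).
Qed.
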